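(* Let $X,E,F,G$ be locally convex spaces over $\mathbb{K}$ such that $X$ is a $k^\infty$-space. Let $U\subseteq X$ be open, $n\in\mathbb{N}_0\cup\{\infty\}$, and let $\mathcal{S}=b$ or $\mathcal{S}=c$. If $f\colon U\to L(E,F)_{\mathcal{S}}$ and $g\colon U\to L(F,G)_{\mathcal{S}}$ are $C^n_{\mathbb{K}}$-maps, then the map $U\to L(E,G)_{\mathcal{S}}$, $z\mapsto g(z)\circ f(z)$, is $C^n_{\mathbb{K}}$.
   Context: $L(E,F)_b$ (resp. $L(E,F)_c$) is the space of continuous linear maps $E\to F$ with the topology of uniform convergence on bounded (resp. compact) subsets of $E$. $C^n_{\mathbb{K}}$-maps in Keller's sense: $f$ is $C^0$ if continuous; $C^1$ if continuous, all directional derivatives $df(x,y)=\lim_{t\to0}(f(x+ty)-f(x))/t$ exist and $df\colon U\times X\to F$ is continuous; $C^{n+1}$ if $C^1$ and $df$ is $C^n$; $C^\infty$ if $C^n$ for all $n$. A Hausdorff space $X$ is a $k$-space if a set is closed whenever its intersection with each compact set is closed in that compact set; $X$ is a $k^\infty$-space if it is Hausdorff and all finite powers $X^n$ are $k$-spaces (e.g. $X=\mathbb{K}=\mathbb{C}$, or any metrizable space). *)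

From HB Require Import structures.
From mathcomp Require Import all_boot all_order all_algebra.
From mathcomp Require Import all_classical all_reals all_analysis.
From mathcomp Require Import complex.
Set Implicit Arguments.
Unset Strict Implicit.
Unset Printing Implicit Defensive.
Import Order.TTheory GRing.Theory Num.Theory.
Import numFieldTopology.Exports numFieldNormedType.Exports.
Local Open Scope classical_set_scope.
Local Open Scope ring_scope.

Section Defs.
Variable K : numFieldType.

Definition k_space (T : topologicalType) : Prop :=
  hausdorff_space T /\
  forall A : set T,
    (forall C : set T, compact C -> exists D : set T, closed D /\ A `&` C = D `&` C) ->
    closed A.

Definition k_infty_space (T : topologicalType) : Prop :=
  hausdorff_space T /\ forall n : nat, k_space {ptws 'I_n -> T}.

Definition vN_bounded (E : tvsType K) (B : set E) : Prop :=
  forall W : set E, nbhs (0 : E) W ->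
    exists r : K, 0 < r /\
      forall s : K, r <= `|s| -> B `<=` [set s *: w | w in W].

(** The two families of subsets defining L(E,F)_b and L(E,F)_c. *)
Inductive Sfam := S_b | S_c.

Definition Sfam_sets (S : Sfam) (E : tvsType K) : set (set E) :=
  match S with
  | S_b => [set B | vN_bounded B]
  | S_c => [set B | compact B]
  end.

Definition cont_lin (E F : tvsType K) (phi : E -> F) : Prop :=
  (forall (a : K) (u v : E), phi (a *: u + v) = a *: phi u + phi v) /\
  continuous phi.

(** Convergence in L(E,F)_S (topology of uniform convergence on the sets of
    the family S): [phi z] tends to [L] along the filter [Fl]. The basic
    0-neighbourhoods of L(E,F)_S are {psi | psi(B) ⊆ W}, B in S, W a
    0-neighbourhood of F. *)
Definition S_lim (S : Sfam) (E F : tvsType K) (T : Type) (Fl : set_system T)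
    (phi : T -> E -> F) (L : E -> F) : Prop :=
  forall B : set E, Sfam_sets S B ->
  forall W : set F, nbhs (0 : F) W ->
    Fl [set z | forall e, B e -> W (phi z e - L e)].

(** C^0 map U -> L(E,F)_S: values in L(E,F) on U and continuous at each point
    of U (U is open, so this is continuity on U). *)
Definition C0_LS (S : Sfam) (E F : tvsType K) (X : tvsType K) (U : set X)
    (f : X -> E -> F) : Prop :=
  (forall x, U x -> cont_lin (f x)) /\
  (forall x, U x -> S_lim S (nbhs x) f (f x)).

Fixpoint Cn_LS (S : Sfam) (E F : tvsType K) (n : nat) :
    forall X : tvsType K, set X -> (X -> E -> F) -> Prop :=
  fun X U f =>
    C0_LS S U f /\
    match n with
    | 0 => True
    | m.+1 => exists df : (X * X)%type -> E -> F,
        (forall x y, U x ->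
           S_lim S (dnbhs (0 : K))
             (fun t : K => fun e => t^-1 *: (f (x + t *: y) e - f x e))
             (df (x, y))) /\
        @Cn_LS S E F m (X * X)%type (U `*` setT) df
    end.

Inductive natinf := Fin of nat | Inf.

Definition Ck_LS (S : Sfam) (E F : tvsType K) (n : natinf) (X : tvsType K)
    (U : set X) (f : X -> E -> F) : Prop :=
  match n with
  | Fin k => @Cn_LS S E F k X U f
  | Inf => forall k, @Cn_LS S E F k X U f
  end.

End Defs.

From HB Require Import structures.
From mathcomp Require Import all_boot all_order all_algebra.
From mathcomp Require Import all_classical all_reals all_analysis.
From mathcomp Require Import complex.
From mathcomp Require Import lra.
Import Order.TTheory GRing.Theory Num.Theory.
Import numFieldTopology.Exports numFieldNormedType.Exports.
Local Open Scope classical_set_scope.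
Local Open Scope ring_scope.
Set Implicit Arguments.
Unset Strict Implicit.
Unset Printing Implicit Defensive.

(* Composition L(F,G)_S x L(E,F)_S -> L(E,G)_S is not jointly continuous, but
   it is continuous at (A, B) along pairs (a, b) such that every b maps a given
   set of S into one common set of S.  If f is C^0 and C is a compact subset of
   U, then f(C)(B) = {f(z)(e) | z in C, e in B} is again in S for B in S, so
   z |-> g(z) o f(z) is continuous on every compact subset of U, hence
   continuous since X is a k-space.  The same bound along the compact segment
   {x + t y | t in D}, D a compact neighbourhood of 0 in K, gives the product
   rule d(g o f)(x, y) = dg(x, y) o f(x) + g(x) o df(x, y); both summands are
   compositions of C^(n-1) maps on U x X, and X x X is homeomorphic to a power
   of X, hence a k-space, so induction on n applies. *)

Section ContLin.
Variables (K : numFieldType) (E F : tvsType K) (T : E -> F).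
Hypothesis hT : cont_lin T.

Lemma cont_linD u v : T (u + v) = T u + T v.
Proof. by have := hT.1 1 u v; rewrite !scale1r. Qed.

Lemma cont_lin0 : T 0 = 0.
Proof. by apply: (@addrI _ (T 0)); rewrite -cont_linD !addr0. Qed.

Lemma cont_linZ a u : T (a *: u) = a *: T u.
Proof. by have := hT.1 a u 0; rewrite addr0 cont_lin0 addr0. Qed.

Lemma cont_linB u v : T (u - v) = T u - T v.
Proof. by rewrite cont_linD -scaleN1r cont_linZ scaleN1r. Qed.

Lemma cont_lin_nbhs0 (W : set F) : nbhs 0 W -> nbhs 0 (T @^-1` W).
Proof. by move=> W0; have := hT.2 0 W; rewrite /= cont_lin0; exact. Qed.

End ContLin.

Lemma cont_lin_fst (K : numFieldType) (V W : tvsType K) : cont_lin (@fst V W).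
Proof. by split => // p; exact: cvg_fst. Qed.

Lemma continuous_map_pair (T1 T2 : topologicalType) (p : T1 -> T2) :
  continuous p -> continuous (fun v : T1 * T1 => (p v.1, p v.2)).
Proof.
move=> cp v; apply: cvg_pair.
  by apply: (@continuous_comp _ _ _ fst p); [exact: cvg_fst | exact: cp].
by apply: (@continuous_comp _ _ _ snd p); [exact: cvg_snd | exact: cp].
Qed.

Lemma cont_lin_pair (K : numFieldType) (V W : tvsType K) (l : W -> V) :
  cont_lin l -> cont_lin (fun p : W * W => (l p.1, l p.2)).
Proof.
move=> hl; split; last exact: continuous_map_pair hl.2.
by move=> a [u1 u2] [v1 v2] /=; rewrite !hl.1.
Qed.

Section TvsNbhs.
Variables (K : numFieldType) (E : tvsType K).

Lemma nbhs0_split (W : set E) : nbhs 0 W ->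
  exists2 W', nbhs 0 W' & forall a b, W' a -> W' b -> W (a + b).
Proof.
move=> W0; have := @add_continuous E (0, 0).
rewrite /continuous_at /= addr0 => /(_ W W0) [[A B] /= [nA nB] sAB].
exists (A `&` B); first exact: filterI.
by move=> a b [Aa _] [_ Bb]; apply: (sAB (a, b)).
Qed.

Lemma nbhs_addr0P (y : E) (P : set E) :
  nbhs y P <-> nbhs 0 [set w | P (y + w)].
Proof.
split.
  move=> /(@nbhsB _ _ _ y (- y)); rewrite addNr; apply: filterS.
  by move=> w [p Pp <-]; rewrite /= addNKr.
by move=> /(@nbhsT _ _ _ y); apply: filterS => w [p Pp <-].
Qed.

Lemma tvs_continuousD (T : topologicalType) (p q : T -> E) :
  continuous p -> continuous q -> continuous (fun t => p t + q t).
Proof.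
move=> cp cq t; apply: (@continuous_comp _ _ _ (fun t => (p t, q t))
  (fun z : E * E => z.1 + z.2)); last exact: add_continuous.
by apply: cvg_pair; [exact: cp | exact: cq].
Qed.

Lemma tvs_continuous_line (x y : E) : continuous (fun t : K => x + t *: y).
Proof.
apply: (tvs_continuousD (p := fun _ => x) (q := fun t : K => t *: y)).
  exact: cst_continuous.
move=> t; apply: (@continuous_comp _ _ _ (fun t => (t : K^o, y))
  (fun z : K^o * E => z.1 *: z.2)); last exact: scale_continuous.
have ht : (fun s : K => (s : K^o)) @ nbhs t --> (t : K^o) by exact: cvg_id.
exact: (cvg_pair ht (cvg_cst y)).
Qed.

Lemma near0_line (x y : E) (P : set E) :
  nbhs x P -> \forall t \near (0 : K), P (x + t *: y).
Proof.
by have := @tvs_continuous_line x y 0; rewrite /continuous_at scale0r addr0; exact.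
Qed.

Lemma ge_normfV (r c : K) : 0 < r -> c != 0 -> `|c| < r^-1 -> r <= `|c^-1|.
Proof.
move=> r0 c0 hc; rewrite normfV; apply: ltW.
by rewrite -[X in X < _](invrK r) ltf_pV2 ?posrE ?invr_gt0 ?normr_gt0.
Qed.

Lemma lt_normfV (s eps : K) : 0 < eps -> 2 * eps^-1 <= `|s| ->
  s != 0 /\ `|s^-1| < eps.
Proof.
move=> e0 hs; have h1 : eps^-1 < `|s|.
  by apply: lt_le_trans hs; rewrite ltr_pMl ?invr_gt0 // ltr1n.
have s0 : 0 < `|s| by apply: lt_trans h1; rewrite invr_gt0.
split; first by rewrite -normr_gt0.
by rewrite normfV -[X in _ < X](invrK eps) ltf_pV2 ?posrE ?invr_gt0.
Qed.

Lemma vN_bounded_near0 (A W : set E) : vN_bounded A -> nbhs 0 W ->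
  \forall c \near (0 : K), forall a, A a -> W (c *: a).
Proof.
move=> hA W0; have [r [r0 hr]] := hA W W0.
apply/nbhs_ballP; exists r^-1; first by rewrite /= invr_gt0.
move=> c; rewrite -ball_normE /= sub0r normrN => hc a Aa.
have [->|c0] := eqVneq c 0; first by rewrite scale0r; exact: nbhs_singleton.
have [w Ww <-] := hr c^-1 (ge_normfV r0 c0 hc) a Aa.
by rewrite scalerA divff // scale1r.
Qed.

Lemma near0_vN_bounded (A : set E) :
  (forall W, nbhs 0 W -> \forall c \near (0 : K), forall a, A a -> W (c *: a)) ->
  vN_bounded A.
Proof.
move=> hA W W0; have /nbhs_ballP [eps /= eps0 heps] := hA W W0.
exists (2 * eps^-1); split; first by rewrite mulr_gt0 // invr_gt0.
move=> s hs a Aa; have [s0 hs'] := lt_normfV eps0 hs.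
exists (s^-1 *: a); last by rewrite scalerA divff // scale1r.
by apply: (heps s^-1) => //; rewrite -ball_normE /= sub0r normrN.
Qed.

End TvsNbhs.

Section SLim.
Variables (K : numFieldType) (S : Sfam) (E F : tvsType K) (T : Type).
Variable (Fl : set_system T).

Lemma S_lim_eq (phi psi : T -> E -> F) L :
  (forall t e, phi t e = psi t e) -> S_lim S Fl phi L -> S_lim S Fl psi L.
Proof.
move=> h; suff -> : psi = phi by [].
by apply/funext => t; apply/funext => e; rewrite h.
Qed.

Lemma S_lim_fmap (T' : Type) (Fl' : set_system T') (h : T' -> T)
  (phi : T -> E -> F) L :
  (forall P, Fl P -> Fl' (h @^-1` P)) ->
  S_lim S Fl phi L -> S_lim S Fl' (fun t => phi (h t)) L.
Proof. by move=> hh H B SB W W0; exact: hh (H B SB W W0). Qed.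

Hypothesis FF : Filter Fl.

Lemma S_limD (a b : T -> E -> F) A B' :
  S_lim S Fl a A -> S_lim S Fl b B' ->
  S_lim S Fl (fun t e => a t e + b t e) (fun e => A e + B' e).
Proof.
move=> Ha Hb B SB W W0; have [W' W'0 hW'] := nbhs0_split W0.
apply: filterS (filterI (Ha B SB W' W'0) (Hb B SB W' W'0)).
by move=> t [h1 h2] e Be; rewrite opprD addrACA; exact: hW' (h1 e Be) (h2 e Be).
Qed.

Lemma S_lim_cont_lin (G : tvsType K) (l : F -> G) (b : T -> E -> F) B' :
  cont_lin l -> S_lim S Fl b B' ->
  S_lim S Fl (fun t e => l (b t e)) (fun e => l (B' e)).
Proof.
move=> hl Hb B SB W W0.
apply: filterS (Hb B SB _ (cont_lin_nbhs0 hl W0)) => t h e Be.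
by rewrite -(cont_linB hl); exact: h.
Qed.

(* The hypothesis on [b] is what replaces the missing joint continuity of
   composition. *)
Lemma S_lim_compose (G : tvsType K) (a : T -> F -> G) (b : T -> E -> F) A B' :
  S_lim S Fl a A -> S_lim S Fl b B' -> cont_lin A ->
  (forall B, Sfam_sets S B -> exists2 M, Sfam_sets S M &
      Fl [set t | forall e, B e -> M (b t e)]) ->
  S_lim S Fl (fun t e => a t (b t e)) (fun e => A (B' e)).
Proof.
move=> Ha Hb hA Hbd B SB W W0; have [W' W'0 hW'] := nbhs0_split W0.
have [M SM FM] := Hbd B SB.
apply: filterS (filterI FM (filterI (Ha M SM W' W'0)
   (Hb B SB _ (cont_lin_nbhs0 hA W'0)))) => t [h1 [h2 h3]] e Be.
rewrite -(subrKA (A (b t e))) -(cont_linB hA).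
exact: hW' (h2 _ (h1 e Be)) (h3 e Be).
Qed.

End SLim.

Section Image.
Variables (K : numFieldType) (V E F : tvsType K) (U C : set V).
Hypotheses (cC : compact C) (CU : C `<=` U).

Lemma C0_LS_image_vN_bounded (f : V -> E -> F) (B : set E) :
  C0_LS S_b U f -> vN_bounded B -> vN_bounded [set f p.1 p.2 | p in C `*` B].
Proof.
move=> [hl hcont] hB; apply: near0_vN_bounded => W W0.
have [W1 W10 hW1] := nbhs0_split W0.
suff: \forall c \near (0 : K), forall z, C z -> forall e, B e -> W (c *: f z e).
  by apply: filterS => c hc _ [[z e] [Cz Be] <-]; exact: hc.
move/compact_near_coveringP : cC => /(_ K (nbhs (0 : K))
   (fun c z => forall e, B e -> W (c *: f z e)) _); apply => z1 /CU Uz1.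
have := @scale_continuous K F (0, 0); rewrite /continuous_at /= scaler0.
move=> /(_ W1 W10) [[A1 A2] /= [nA1 nA2] sA].
have Hc := vN_bounded_near0 hB (cont_lin_nbhs0 (hl z1 Uz1) W10).
exists ([set z | forall e, B e -> A2 (f z e - f z1 e)],
        A1 `&` [set c | forall e, B e -> W1 (f z1 (c *: e))]).
  by split; [exact: hcont z1 Uz1 B hB A2 nA2 | exact: filterI].
move=> [z c] /= [hz [hc1 hc2]] e Be.
have -> : c *: f z e = c *: f z1 e + c *: (f z e - f z1 e).
  by rewrite scalerBr addrC subrK.
apply: hW1; first by rewrite -(cont_linZ (hl z1 Uz1)); exact: hc2.
by apply: (sA (c, f z e - f z1 e)); split; [exact: hc1 | exact: hz].
Qed.

Lemma C0_LS_image_compact (f : V -> E -> F) (B : set E) :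
  C0_LS S_c U f -> compact B -> compact [set f p.1 p.2 | p in C `*` B].
Proof.
move=> [hl hcont] cB.
apply: (@continuous_compact _ _ (fun p : V * E => f p.1 p.2)); last exact: compact_setX.
apply/subspace_continuousP => [[z1 e1]] [/= /CU Uz1 Be1] P /= PN.
have /nbhs0_split [W1 W10 hW1] := (nbhs_addr0P _ _).1 PN.
have He : nbhs e1 [set e | W1 (f z1 e - f z1 e1)].
  apply: ((hl z1 Uz1).2 e1 [set v | W1 (v - f z1 e1)]); apply/nbhs_addr0P.
  by apply: filterS W10 => w /=; rewrite addrC addKr.
exists ([set z | forall e, B e -> W1 (f z e - f z1 e)],
        [set e | W1 (f z1 e - f z1 e1)]).
  by split => //; exact: hcont z1 Uz1 B cB W1 W10.
move=> [z e] /= [hz he] [_ Be]; change (P (f z e)).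
have -> : f z e = f z1 e1 + ((f z e - f z1 e) + (f z1 e - f z1 e1)).
  by rewrite subrKA addrC subrK.
by apply: hW1; [exact: hz | exact: he].
Qed.

Lemma C0_LS_image_Sfam (S : Sfam) (f : V -> E -> F) (B : set E) :
  C0_LS S U f -> Sfam_sets S B ->
  exists2 M, Sfam_sets S M & forall z e, C z -> B e -> M (f z e).
Proof.
move=> hf SB; exists [set f p.1 p.2 | p in C `*` B]; last first.
  by move=> z e Cz Be; exists (z, e).
by case: S hf SB => hf SB; [exact: C0_LS_image_vN_bounded | exact: C0_LS_image_compact].
Qed.

End Image.

Definition compactly_generated (T : topologicalType) := forall A : set T,
  (forall C : set T, compact C -> exists D : set T, closed D /\ A `&` C = D `&` C) ->
  closed A.

Section ContinuityOfComposition.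
Variables (K : numFieldType) (S : Sfam) (V E F G : tvsType K) (U : set V).
Hypothesis oU : open U.

(* The points z of U such that some basic neighbourhood of h z in L(E,G)_S
   lies inside the given one around h z0 form an open set: the complement A
   meets every compact C in a closed set by the hypothesis. *)
Lemma compactly_generated_S_lim (h : V -> E -> G) : compactly_generated V ->
  (forall C, compact C -> forall p, C p -> U p -> forall B, Sfam_sets S B ->
    forall W, nbhs 0 W ->
    \forall z \near p, C z -> forall e, B e -> W (h z e - h p e)) ->
  forall z0, U z0 -> S_lim S (nbhs z0) h (h z0).
Proof.
move=> kV Hc z0 Uz0 B SB W W0.
pose O0 := fun psi : E -> G => forall e, B e -> W (psi e - h z0 e).
pose O := fun psi : E -> G => exists B', Sfam_sets S B' /\ exists W', nbhs 0 W' /\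
  forall phi, (forall e, B' e -> W' (phi e - psi e)) -> O0 phi.
pose A := [set z | ~ (U z /\ O (h z))].
have cA : closed A.
  apply: kV => C cC; exists (closure (A `&` C)); split; first exact: closed_closure.
  apply/seteqP; split.
    by move=> z [Az Cz]; split => //; exact: subset_closure.
  move=> p [clp Cp]; split => // -[Up [B' [SB' [W' [W'0 hW']]]]].
  have [W'' W''0 hW''] := nbhs0_split W'0.
  have N := Hc C cC p Cp Up B' SB' W'' W''0.
  have [z [[Az Cz] [hz Uz]]] := clp _ (filterI N (open_nbhs_nbhs (conj oU Up))).
  apply: Az; split => //; exists B'; split => //; exists W''; split => // phi hphi.
  apply: hW' => e Be; rewrite -(subrKA (h z e)).
  by apply: hW''; [exact: hphi | exact: hz Cz e Be].
have nA : nbhs z0 (~` A).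
  have := closed_openC cA; rewrite openE; apply => /= hA; apply: hA.
  by split => //; exists B; split => //; exists W; split.
apply: filterS nA => z /contrapT [Uz [B' [SB' [W' [W'0 hW']]]]].
by apply: hW' => e Be; rewrite subrr; exact: nbhs_singleton.
Qed.

Lemma C0_LS_comp_near_compact (f : V -> E -> F) (g : V -> F -> G) :
  C0_LS S U f -> C0_LS S U g ->
  forall C, compact C -> forall p, C p -> U p -> forall B, Sfam_sets S B ->
    forall W, nbhs 0 W ->
    \forall z \near p, C z -> forall e, B e -> W (g z (f z e) - g p (f p e)).
Proof.
move=> hf hg C cC p Cp Up B SB W W0.
have [N Np clN] := @uniform_regular V p U (open_nbhs_nbhs (conj oU Up)).
have cK : compact (C `&` closure N) by exact: compact_closedI cC (@closed_closure _ N).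
have [M SM hM] := C0_LS_image_Sfam cK (fun z Kz => clN z Kz.2) hf SB.
have [W' W'0 hW'] := nbhs0_split W0.
have Hg := hg.2 p Up M SM W' W'0.
have Hf := hf.2 p Up B SB _ (cont_lin_nbhs0 (hg.1 p Up) W'0).
apply: filterS (filterI Np (filterI Hg Hf)) => z [Nz [hz1 hz2]] Cz e Be.
have Kz : (C `&` closure N) z by split => //; exact: subset_closure.
rewrite -(subrKA (g p (f z e))) -(cont_linB (hg.1 p Up)).
by apply: hW'; [exact: hz1 _ (hM z e Kz Be) | exact: hz2 e Be].
Qed.

Lemma C0_LS_comp (f : V -> E -> F) (g : V -> F -> G) : compactly_generated V ->
  C0_LS S U f -> C0_LS S U g -> C0_LS S U (fun z e => g z (f z e)).
Proof.
move=> kV hf hg; split; last first.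
  exact: compactly_generated_S_lim kV (C0_LS_comp_near_compact hf hg).
move=> z Uz; split; first by move=> a u v /=; rewrite (hf.1 z Uz).1 (hg.1 z Uz).1.
by move=> e; apply: continuous_comp; [exact: (hf.1 z Uz).2 | exact: (hg.1 z Uz).2].
Qed.

Hypothesis compact_nbhs0 : exists D : set K, compact D /\ nbhs 0 D.

Lemma C0_LS_line_Sfam (f : V -> E -> F) (x y : V) : C0_LS S U f -> U x ->
  forall B, Sfam_sets S B -> exists2 M, Sfam_sets S M &
    \forall t \near (0 : K), forall e, B e -> M (f (x + t *: y) e).
Proof.
move=> hf Ux B SB; have [D [cD D0]] := compact_nbhs0.
have nU : \forall t \near (0 : K), U (x + t *: y).
  exact: near0_line (open_nbhs_nbhs (conj oU Ux)).
have [N N0 clN] := @uniform_regular K 0 _ nU.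
have cK : compact ((fun t => x + t *: y) @` (D `&` closure N)).
  apply: continuous_compact; first exact/continuous_subspaceT/tvs_continuous_line.
  exact: compact_closedI cD (@closed_closure _ N).
have KU : (fun t => x + t *: y) @` (D `&` closure N) `<=` U.
  by move=> z [t [_ /clN Ut] <-].
have [M SM hM] := C0_LS_image_Sfam cK KU hf SB; exists M => //.
apply: filterS (filterI D0 N0) => t [Dt Nt] e Be; apply: hM => //.
by exists t => //; split => //; exact: subset_closure.
Qed.

Lemma S_lim_diff_quotient_comp (f : V -> E -> F) (g : V -> F -> G)
  (x y : V) (df : E -> F) (dg : F -> G) :
  C0_LS S U f -> C0_LS S U g -> U x ->
  S_lim S (dnbhs (0 : K))
    (fun t e => t^-1 *: (f (x + t *: y) e - f x e)) df ->
  S_lim S (dnbhs (0 : K))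
    (fun t e => t^-1 *: (g (x + t *: y) e - g x e)) dg ->
  cont_lin dg ->
  S_lim S (dnbhs (0 : K))
    (fun t e => t^-1 *: (g (x + t *: y) (f (x + t *: y) e) - g x (f x e)))
    (fun e => dg (f x e) + g x (df e)).
Proof.
move=> hf hg Ux Hdf Hdg hdg; have FF : Filter (dnbhs (0 : K)) by exact: _.
have Hf : S_lim S (dnbhs (0 : K)) (fun t => f (x + t *: y)) (f x).
  by apply: (S_lim_fmap _ (hf.2 x Ux)) => P /(near0_line y) /nbhs_dnbhs.
have Hbd B : Sfam_sets S B -> exists2 M, Sfam_sets S M &
    dnbhs (0 : K) [set t | forall e, B e -> M (f (x + t *: y) e)].
  by move=> /(C0_LS_line_Sfam y hf Ux) [M SM /nbhs_dnbhs hM]; exists M.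
have := S_limD FF (S_lim_compose FF Hdg Hf hdg Hbd)
  (S_lim_cont_lin FF (hg.1 x Ux) Hdf).
apply: S_lim_eq => t e /=.
by rewrite (cont_linZ (hg.1 x Ux)) (cont_linB (hg.1 x Ux)) -scalerDr subrKA.
Qed.

End ContinuityOfComposition.

Lemma open_setXT (T1 T2 : topologicalType) (U : set T1) :
  open U -> open (U `*` [set: T2]).
Proof.
move=> oU; rewrite openE => -[a b] [Ua _].
by exists (U, setT) => //; split; [exact: open_nbhs_nbhs | exact: filterT].
Qed.

Section CnAlgebra.
Variables (K : numFieldType) (S : Sfam).

Lemma Cn_LS_C0 m (V E F : tvsType K) (U : set V) (f : V -> E -> F) :
  Cn_LS S m U f -> C0_LS S U f.
Proof. by case: m => [|m] []. Qed.

Lemma Cn_LS_pred m : forall (V E F : tvsType K) (U : set V) (f : V -> E -> F),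
  Cn_LS S m.+1 U f -> Cn_LS S m U f.
Proof.
elim: m => [|m IH] V E F U f [h [df [hd hC]]]; first by split.
by split => //; exists df; split => //; exact: IH.
Qed.

Lemma C0_LSD (V E F : tvsType K) (U : set V) (f1 f2 : V -> E -> F) :
  C0_LS S U f1 -> C0_LS S U f2 -> C0_LS S U (fun z e => f1 z e + f2 z e).
Proof.
move=> [l1 c1] [l2 c2]; split => z Uz; last exact: S_limD (c1 z Uz) (c2 z Uz).
split; first by move=> a u v; rewrite (l1 z Uz).1 (l2 z Uz).1 scalerDr addrACA.
by apply: tvs_continuousD; [exact: (l1 z Uz).2 | exact: (l2 z Uz).2].
Qed.

Lemma Cn_LSD m : forall (V E F : tvsType K) (U : set V) (f1 f2 : V -> E -> F),
  Cn_LS S m U f1 -> Cn_LS S m U f2 -> Cn_LS S m U (fun z e => f1 z e + f2 z e).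
Proof.
elim: m => [|m IH] V E F U f1 f2.
  by move=> [h1 _] [h2 _]; split => //; exact: C0_LSD.
move=> [h1 [d1 [hd1 hC1]]] [h2 [d2 [hd2 hC2]]]; split; first exact: C0_LSD.
exists (fun p e => d1 p e + d2 p e); split; last exact: IH.
move=> x y Ux; apply: S_lim_eq (S_limD _ (hd1 x y Ux) (hd2 x y Ux)) => t e.
by rewrite -scalerDr opprD addrACA.
Qed.

Lemma C0_LS_comp_cont_lin (V W E F : tvsType K) (l : W -> V) (U : set V)
  (U' : set W) (f : V -> E -> F) : cont_lin l -> (forall w, U' w -> U (l w)) ->
  C0_LS S U f -> C0_LS S U' (fun w => f (l w)).
Proof.
move=> hl hU [hf1 hf2]; split; first by move=> w /hU; exact: hf1.
by move=> w /hU Uw; apply: S_lim_fmap (hf2 _ Uw) => P; exact: (hl.2 w P).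
Qed.

Lemma Cn_LS_comp_cont_lin m : forall (V W E F : tvsType K) (l : W -> V)
  (U : set V) (U' : set W) (f : V -> E -> F),
  cont_lin l -> (forall w, U' w -> U (l w)) ->
  Cn_LS S m U f -> Cn_LS S m U' (fun w => f (l w)).
Proof.
elim: m => [|m IH] V W E F l U U' f hl hU.
  by move=> [h _]; split => //; exact: C0_LS_comp_cont_lin h.
move=> [h [df [hd hC]]]; split; first exact: C0_LS_comp_cont_lin h.
exists (fun p => df (l p.1, l p.2)); split.
  move=> w w' Uw; apply: S_lim_eq (hd (l w) (l w') (hU w Uw)) => t e.
  by rewrite [w + _]addrC hl.1 [_ + l w]addrC.
apply: (IH _ _ _ _ (fun p : W * W => (l p.1, l p.2)) (U `*` setT)) => //.
  exact: cont_lin_pair.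
by move=> [w w'] [/= Uw _]; split => //=; exact: hU.
Qed.

End CnAlgebra.

Section SmoothnessOfComposition.
Variables (K : numFieldType) (S : Sfam) (P : tvsType K -> Prop).
Hypothesis P_compactly_generated : forall V, P V -> compactly_generated V.
Hypothesis P_square : forall V, P V -> P (V * V)%type.
Hypothesis compact_nbhs0 : exists D : set K, compact D /\ nbhs 0 D.

Lemma Cn_LS_comp m : forall (V E F G : tvsType K) (U : set V)
  (f : V -> E -> F) (g : V -> F -> G), P V -> open U ->
  Cn_LS S m U f -> Cn_LS S m U g -> Cn_LS S m U (fun z e => g z (f z e)).
Proof.
elim: m => [|m IH] V E F G U f g PV oU Hf Hg;
  have hfg := C0_LS_comp oU (P_compactly_generated PV) (Cn_LS_C0 Hf) (Cn_LS_C0 Hg).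
  by split.
have [hf [df [hdf cdf]]] := Hf; have [hg [dg [hdg cdg]]] := Hg; split => //.
exists (fun p e => dg p (f p.1 e) + g p.1 (df p e)); split.
  move=> x y Ux; apply: (S_lim_diff_quotient_comp oU compact_nbhs0 hf hg Ux
    (hdf x y Ux) (hdg x y Ux)).
  by apply: (Cn_LS_C0 cdg).1; split.
have oU2 : open (U `*` [set: V]) by exact: open_setXT.
have lift (E' F' : tvsType K) (h : V -> E' -> F') :
    Cn_LS S m.+1 U h -> Cn_LS S m (U `*` [set: V]) (fun p : V * V => h p.1).
  by move=> /Cn_LS_pred; apply: Cn_LS_comp_cont_lin; [exact: cont_lin_fst | move=> w []].
apply: (Cn_LSD (f1 := fun p e => dg p (f p.1 e)) (f2 := fun p e => g p.1 (df p e))).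
  apply: (IH _ _ _ _ _ (fun p : V * V => f p.1) dg) => //; last exact: lift.
  exact: P_square.
apply: (IH _ _ _ _ _ df (fun p : V * V => g p.1)) => //; last exact: lift.
exact: P_square.
Qed.

End SmoothnessOfComposition.

Definition homeo (T1 T2 : topologicalType) (p : T1 -> T2) (q : T2 -> T1) :=
  [/\ continuous p, continuous q, cancel p q & cancel q p].

Lemma homeo_comp (T1 T2 T3 : topologicalType) (p : T1 -> T2) (q : T2 -> T1)
  (p' : T2 -> T3) (q' : T3 -> T2) :
  homeo p q -> homeo p' q' -> homeo (p' \o p) (q \o q').
Proof.
move=> [cp cq pK qK] [cp' cq' pK' qK']; split; [ | | exact: can_comp pK' pK
  | exact: can_comp qK qK'].
- by move=> x; apply: continuous_comp; [exact: cp | exact: cp'].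
- by move=> x; apply: continuous_comp; [exact: cq' | exact: cq].
Qed.

Lemma homeo_pair (T1 T2 : topologicalType) (p : T1 -> T2) (q : T2 -> T1) :
  homeo p q -> homeo (fun v : T1 * T1 => (p v.1, p v.2))
                     (fun w : T2 * T2 => (q w.1, q w.2)).
Proof.
move=> [cp cq pK qK]; split; try exact: continuous_map_pair.
- by move=> [a b] /=; rewrite !pK.
- by move=> [a b] /=; rewrite !qK.
Qed.

Lemma compactly_generated_homeo (T1 T2 : topologicalType) (p : T1 -> T2)
  (q : T2 -> T1) : homeo p q -> compactly_generated T2 -> compactly_generated T1.
Proof.
move=> [cp cq pK qK] k2 A hA.
have cA2 : closed (q @^-1` A).
  apply: k2 => C2 cC2.
  have cC1 : compact (q @` C2).
    exact: continuous_compact (continuous_subspaceT cq) cC2.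
  have [D1 [cD1 eq1]] := hA _ cC1; exists (q @^-1` D1); split.
    by move/continuous_closedP : cq; apply.
  apply/seteqP; split => z [h Cz]; split => //.
    have : (A `&` q @` C2) (q z) by split => //; exists z.
    by rewrite eq1; case.
  have : (D1 `&` q @` C2) (q z) by split => //; exists z.
  by rewrite -eq1; case.
have -> : A = p @^-1` (q @^-1` A) by apply/seteqP; split => x /=; rewrite pK.
by move/continuous_closedP : cp; apply.
Qed.

Section Powers.
Variables (I : eqType) (X : topologicalType).

Lemma ptws_continuous (T : topologicalType) (h : T -> {ptws I -> X}) :
  (forall i, continuous (fun t => h t i)) -> continuous h.
Proof.
move=> hc t; apply/cvg_sup => i.
move=> U [? /= [[W oW <-]]] /= Wsfz /filterS; apply; apply: (hc i t).
exact: open_nbhs_nbhs.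
Qed.

Lemma ptws_eval_continuous (i : I) : continuous (fun c : {ptws I -> X} => c i).
Proof. exact: (@proj_continuous I (fun _ => X) i). Qed.

End Powers.

Lemma homeo_ptws_split (X : topologicalType) (n : nat) :
  homeo (T1 := ({ptws 'I_n -> X} * {ptws 'I_n -> X})%type) (T2 := {ptws 'I_(n + n) -> X})
    (fun c i => match fintype.split i with inl j => c.1 j | inr j => c.2 j end)
    (fun c => (fun j => c (lshift n j), fun j => c (rshift n j))).
Proof.
have cshift (s : 'I_n -> 'I_(n + n)) :=
  @ptws_continuous 'I_n X {ptws 'I_(n + n) -> X} (fun c j => c (s j))
    (fun j => @ptws_eval_continuous _ X (s j)).
split.
- apply: ptws_continuous => i; case: (fintype.split i) => j c.
    apply: (@continuous_comp _ _ _ fst (fun c : {ptws 'I_n -> X} => c j)).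
      exact: cvg_fst.
    exact: ptws_eval_continuous.
  apply: (@continuous_comp _ _ _ snd (fun c : {ptws 'I_n -> X} => c j)).
    exact: cvg_snd.
  exact: ptws_eval_continuous.
- by move=> c; exact: (cvg_pair (cshift (@lshift n n) c) (cshift (@rshift n n) c)).
- move=> [a b] /=; congr pair; apply: funext => j.
    by rewrite (unsplitK (inl j : 'I_n + 'I_n)).
  by rewrite (unsplitK (inr j : 'I_n + 'I_n)).
- move=> c; apply: funext => i /=; rewrite -[in RHS](splitK i).
  by case: (fintype.split i).
Qed.

Section PowerHomeomorphic.
Variables (K : numFieldType) (X : tvsType K).

Definition power_homeomorphic (V : tvsType K) :=
  exists n (p : V -> {ptws 'I_n -> X}) (q : {ptws 'I_n -> X} -> V), homeo p q.

Lemma power_homeomorphic_self : power_homeomorphic X.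
Proof.
exists 1%N, (fun x => fun _ => x), (fun c => c ord0); split.
- by apply: ptws_continuous => i x; exact: cvg_id.
- exact: ptws_eval_continuous.
- by [].
- by move=> c; apply: funext => i; rewrite (ord1 i).
Qed.

Lemma power_homeomorphic_square V :
  power_homeomorphic V -> power_homeomorphic (V * V)%type.
Proof.
move=> [n [p [q hpq]]]; exists (n + n)%N.
by do 2 eexists; exact: homeo_comp (homeo_pair hpq) (homeo_ptws_split X n).
Qed.

Lemma k_infty_compactly_generated V :
  k_infty_space X -> power_homeomorphic V -> compactly_generated V.
Proof. by move=> hX [n [p [q hpq]]]; exact: compactly_generated_homeo hpq (hX.2 n).2. Qed.

End PowerHomeomorphic.

Lemma compact_nbhs0_real (R : realType) :
  exists D : set (R : numFieldType), compact D /\ nbhs (0 : R : numFieldType) D.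
Proof.
exists `[-1, 1]%classic; split; first exact: segment_compact.
apply/nbhs_ballP; exists 1 => //= z; rewrite -ball_normE /= sub0r normrN.
by rewrite ltr_norml => /andP [h1 h2]; rewrite /= in_itv /= !ltW.
Qed.

Section Complex.
Local Open Scope complex_scope.
Variable R : realType.

Lemma continuous_complex_pair :
  continuous (fun p : R * R => (p.1 +i* p.2 : (R[i] : numFieldType))).
Proof.
move=> [a0 b0]; apply/cvgrPdist_lt => eps eps0.
have : (0 : R[i]) < eps by [].
rewrite ltcE => /andP [/eqP hIm e0]; set e := complex.Re eps in e0.
have -> : eps = e%:C by rewrite /e; move: hIm; case: (eps) => a b /= ->.
have e20 : 0 < e / 2 by rewrite divr_gt0.
exists ([set a | `|a0 - a| < e / 2], [set b | `|b0 - b| < e / 2]).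
  by split; apply/nbhs_ballP; exists (e / 2) => // x; rewrite -ball_normE.
move=> [a b] /= [ha hb]; rewrite normc_def /= ltcR.
rewrite -[X in _ < X](ger0_norm (ltW e0)) -sqrtr_sqr ltr_sqrt ?exprn_gt0 //.
by move: ha hb; rewrite !ltr_norml => /andP [h1 h2] /andP [h3 h4]; nra.
Qed.

Lemma compact_nbhs0_complex :
  exists D : set (R[i] : numFieldType), compact D /\ nbhs (0 : R[i] : numFieldType) D.
Proof.
exists ((fun p : R * R => (p.1 +i* p.2 : R[i])) @`
  (`[-1, 1]%classic `*` `[-1, 1]%classic)); split.
  apply: continuous_compact; last by apply: compact_setX; exact: segment_compact.
  exact/continuous_subspaceT/continuous_complex_pair.
apply/nbhs_ballP; exists 1 => //= -[a b]; rewrite -ball_normE /= sub0r normrN.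
rewrite normc_def /= ltcR => h0.
have h : a ^+ 2 + b ^+ 2 < 1 by rewrite -ltr_sqrt // sqrtr1.
by exists (a, b) => //; split => /=; rewrite in_itv /=; apply/andP; split; nra.
Qed.

End Complex.

Theorem proposition3p1 (R : realType) (K : numFieldType)
  (hK : K = R :> numFieldType \/ K = R[i] :> numFieldType)
  (X E F G : tvsType K)
  (hX : k_infty_space X) (hE : hausdorff_space E) (hF : hausdorff_space F)
  (hG : hausdorff_space G)
  (U : set X) (hU : open U) (n : natinf) (S : Sfam)
  (f : X -> E -> F) (g : X -> F -> G) :
  Ck_LS S n U f -> Ck_LS S n U g ->
  Ck_LS S n U (fun z => fun e => g z (f z e)).
Proof.
have compact_nbhs0 : exists D : set K, compact D /\ nbhs 0 D.
  by case: hK => ->; [exact: compact_nbhs0_real | exact: compact_nbhs0_complex].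
have comp m := @Cn_LS_comp K S _ (fun V => k_infty_compactly_generated (V := V) hX)
  (@power_homeomorphic_square K X) compact_nbhs0 m _ _ _ _ _ f g
  (power_homeomorphic_self X) hU.
by case: n => [k|] Hf Hg /=; [exact: comp | move=> k; exact: comp].
Qed.
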